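(* Let $N\ge 2$ and let $(\nu_r^{(1:N)})_{r\ge1}$ be vectors of non-negative integers with $\sum_i \nu_r^{(i)} = N$, with $c_N$ and $\tau_N$ as defined below, and assume $\tau_N(u)<\infty$ for all $u\ge0$. Fix real $t > s > 0$ and $l \in \mathbb{N}$. Then (a) $\displaystyle\sum_{\substack{s_1,\dots,s_l = \tau_N(s)+1\\ \text{all distinct}}}^{\tau_N(t)} \prod_{j=1}^l c_N(s_j) \leq (t-s+1)^l \leq (t+1)^l$; (b) $\displaystyle\Bigg[(t-s)^l - \Bigg(c_N(\tau_N(s)) + \binom{l}{2}\sum_{r=\tau_N(s)+1}^{\tau_N(t)} c_N(r)^2\Bigg)(t+1)^l\Bigg]\mathbb{1}_{\{c_N(\tau_N(s)) \leq t-s\}} \leq \sum_{\substack{s_1,\dots,s_l = \tau_N(s)+1\\ \text{all distinct}}}^{\tau_N(t)} \prod_{j=1}^l c_N(s_j) \leq (t-s)^l + c_N(\tau_N(t))(t+1)^l.$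
   Context: $c_N(r) := \frac{1}{(N)_2}\sum_{i=1}^N (\nu_r^{(i)})_2$ with $(x)_k$ the falling factorial; $\tau_N(u) := \inf\{s\in\{0,1,2,\dots\} : \sum_{r=1}^s c_N(r) \ge u\}$. *)

From HB Require Import structures.
From mathcomp Require Import all_boot all_order all_algebra.
From mathcomp Require Import boolp reals.
Set Implicit Arguments. Unset Strict Implicit. Unset Printing Implicit Defensive.
Import Order.TTheory GRing.Theory Num.Theory.
Local Open Scope ring_scope.

Definition cN (R : realType) (N : nat) (nu : nat -> 'I_N -> nat) (r : nat) : R :=
  ((N ^_ 2)%:R)^-1 * \sum_(i < N) ((nu r i) ^_ 2)%:R.

Definition psum (R : realType) (c : nat -> R) (s : nat) : R :=
  \sum_(1 <= r < s.+1) c r.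

(* tau(u) = inf { s in N : sum_{r=1}^s c(r) >= u }  (set to 0 if the set is empty;
   the theorem assumes it is nonempty for every u >= 0) *)
Definition tau (R : realType) (c : nat -> R) (u : R) : nat :=
  match pselect (exists s, u <= psum c s) with
  | left h => ex_minn h
  | right _ => 0%N
  end.

Definition distinct_sum (R : realType) (c : nat -> R) (l a b : nat) : R :=
  \sum_(f : {ffun 'I_l -> 'I_b.+1} | injectiveb f && [forall j, (a < f j)%N])
     \prod_(j < l) c (f j).

(* Let W = {tau(s)+1, ..., tau(t)} and X = sum_{r in W} c(r).  Expanding X^l over all
   l-tuples in W shows that the sum S over tuples with distinct entries is at most X^l,
   and the tuples with a coincidence s_j = s_k, each pair (j, k) contributing
   (sum_W c^2) X^(l-2), bound X^l - S by C(l,2) (sum_W c^2) X^(l-2).  Since tau is a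
   first passage time and 0 <= c <= 1 (superadditivity of x |-> (x)_2), X lies between
   t - s - c(tau s) and t - s + c(tau t); convexity of x |-> x^l on [y, y+1] gives
   (y + c)^l <= y^l + c (y+1)^l for 0 <= c <= 1, which turns these into the stated
   bounds. *)

From HB Require Import structures.
From mathcomp Require Import all_boot all_order all_algebra.
From mathcomp Require Import boolp reals.
From mathcomp Require Import zify lra.
Set Implicit Arguments. Unset Strict Implicit. Unset Printing Implicit Defensive.

Import Order.TTheory GRing.Theory Num.Theory.
Local Open Scope ring_scope.

Lemma ffact2_addn_le (x y : nat) : (x ^_ 2 + y ^_ 2 <= (x + y) ^_ 2)%N.
Proof. by rewrite !(ffactnS _ 1) !ffactn1; case: x => [|x]; case: y => [|y] //=; nia. Qed.

Lemma ffact2_sum_le (I : finType) (x : I -> nat) :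
  (\sum_i x i ^_ 2 <= (\sum_i x i) ^_ 2)%N.
Proof.
apply: (big_rec2 (fun a b => (a <= b ^_ 2)%N)) => // i a b _ ab.
by apply: leq_trans (ffact2_addn_le _ _); rewrite leq_add2l.
Qed.

Lemma cN_ge0 (R : realType) (N : nat) (nu : nat -> 'I_N -> nat) (r : nat) :
  0 <= cN R nu r.
Proof. by rewrite mulr_ge0 ?invr_ge0 ?ler0n ?sumr_ge0. Qed.

Lemma cN_le1 (R : realType) (N : nat) (nu : nat -> 'I_N -> nat) (r : nat) :
  (2 <= N)%N -> (\sum_i nu r i)%N = N -> cN R nu r <= 1.
Proof.
move=> N_ge2 sum_nu; rewrite /cN -natr_sum ler_pdivrMl ?ltr0n ?ffact_gt0 //.
by rewrite mulr1 ler_nat; have := ffact2_sum_le (nu r); rewrite sum_nu.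
Qed.

Lemma exprD_le_chord (R : realDomainType) (y c : R) (l : nat) :
  0 <= y -> 0 <= c <= 1 -> (y + c) ^+ l <= y ^+ l + c * ((y + 1) ^+ l - y ^+ l).
Proof.
move=> y_ge0 /andP[c_ge0 c_le1]; elim: l => [|l IHl].
  by rewrite !expr0 subrr mulr0 addr0.
have yl_ge0 : 0 <= y ^+ l by rewrite exprn_ge0.
have gap_ge0 : 0 <= (y + 1) ^+ l - y ^+ l.
  by rewrite subr_ge0 lerXn2r ?nnegrE ?addr_ge0 ?lerDl.
have step : (y + c) ^+ l.+1 <= (y + c) * (y ^+ l + c * ((y + 1) ^+ l - y ^+ l)).
  by rewrite exprS ler_wpM2l ?addr_ge0.
have gap_step : c * (y + c) * ((y + 1) ^+ l - y ^+ l)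
                <= c * (y + 1) * ((y + 1) ^+ l - y ^+ l).
  by rewrite ler_wpM2r // ler_wpM2l // lerD2l.
rewrite !exprS; nra.
Qed.

Lemma ler_wXn2r (R : realDomainType) (n : nat) (x y : R) :
  0 <= x -> x <= y -> x ^+ n <= y ^+ n.
Proof. by move=> x_ge0 le_xy; rewrite lerXn2r ?nnegrE //; apply: le_trans le_xy. Qed.

Lemma exprn_le_addr (R : realDomainType) (x y c : R) (l : nat) :
  0 <= x -> 0 <= y -> 0 <= c <= 1 -> x <= y + c ->
  x ^+ l <= y ^+ l + c * (y + 1) ^+ l.
Proof.
move=> x_ge0 y_ge0 c01 le_x; apply: le_trans (ler_wXn2r l x_ge0 le_x) _.
apply: le_trans (exprD_le_chord l y_ge0 c01) _; case/andP: c01 => c_ge0 _.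
by rewrite lerD2l ler_wpM2l // lerBlDr lerDl exprn_ge0.
Qed.

Section InjectiveTuples.
Variables (R : realDomainType) (I : finType) (F : I -> R) (l : nat).
Hypothesis F_ge0 : forall x, 0 <= F x.

Lemma exprn_sum_ffun :
  (\sum_x F x) ^+ l = \sum_(f : {ffun 'I_l -> I}) \prod_i F (f i).
Proof.
rewrite -[in LHS](card_ord l) -prodr_const.
exact: (bigA_distr_bigA (fun (i : 'I_l) (x : I) => F x)).
Qed.

Lemma sum_ffun_collision (j k : 'I_l) : j != k ->
  \sum_(f : {ffun 'I_l -> I}) (f j == f k)%:R * \prod_i F (f i)
    = (\sum_x F x ^+ 2) * (\sum_x F x) ^+ (l - 2).
Proof.
move=> neq_jk; have neq_kj : k != j by rewrite eq_sym.
pose jk (i : 'I_l) := (i == j) || (i == k).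
(* Weighting coordinates [j] and [k] by the indicator of [r] and summing over [r]
   keeps exactly the tuples with [f j = f k], and makes the sum factorise. *)
pose H r (i : 'I_l) x := (if jk i then (x == r)%:R else 1) * F x.
have collisionE (f : {ffun 'I_l -> I}) :
    (f j == f k)%:R * \prod_i F (f i) = \sum_r \prod_i H r i (f i).
  rewrite /H; under [RHS]eq_bigr => r _ do rewrite big_split /=.
  rewrite -big_distrl /=; congr (_ * _).
  have indE r : \prod_i (if jk i then (f i == r)%:R else 1)
                = (f j == r)%:R * (f k == r)%:R :> R.
    rewrite (bigD1 j) /jk ?eqxx //= (bigD1 k) /= ?neq_kj ?eqxx ?orbT //.
    by rewrite big1 ?mulr1 // => i /andP[/negbTE -> /negbTE ->].
  under [RHS]eq_bigr => r _ do rewrite indE.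
  rewrite (bigD1 (f j)) //= eqxx mul1r big1 ?addr0 1?eq_sym // => r.
  by rewrite eq_sym => /negbTE ->; rewrite mul0r.
have H_sum r i : \sum_x H r i x = if jk i then F r else \sum_x F x.
  rewrite /H; case: (jk i); last by under eq_bigr do rewrite mul1r.
  rewrite (bigD1 r) //= eqxx mul1r big1 ?addr0 // => x /negbTE ->.
  by rewrite mul0r.
have card_rest : #|[pred i : 'I_l | ~~ jk i]| = (l - 2)%N.
  have := cardC (pred2 j k); rewrite card2 neq_jk card_ord => l_eq.
  by rewrite -[in RHS]l_eq addKn; apply: eq_card => i; rewrite !inE.
under eq_bigr do rewrite collisionE.
rewrite exchange_big /= mulr_suml; apply: eq_bigr => r _.
rewrite -(bigA_distr_bigA (H r)) /=.
under eq_bigr do rewrite H_sum.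
rewrite (bigID jk) /= (eq_bigr (fun=> F r)) => [|i -> //].
rewrite [X in _ * X](eq_bigr (fun=> \sum_x F x)) => [|i /negbTE ->] //.
rewrite !prodr_const card_rest; congr (_ ^+ _ * _).
by have := card2 j k; rewrite neq_jk.
Qed.

Lemma ffun_noninjective_collision (f : {ffun 'I_l -> I}) : ~~ injectiveb f ->
  (0 < \sum_(k < l) \sum_(j < l | (j < k)%N) (f j == f k))%N.
Proof.
case/injectivePn => x [y neq_xy fxy].
wlog lt_xy : x y neq_xy fxy / (x < y)%N => [wlog_lt|].
  case: (ltngtP x y) => [|lt_yx|/val_inj eq_xy]; first exact: wlog_lt.
    by apply: (wlog_lt y x); rewrite 1?eq_sym.
  by rewrite eq_xy eqxx in neq_xy.
by rewrite (bigD1 y) //= (bigD1 x) //= fxy eqxx.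
Qed.

Lemma sum_injective_ffun_le :
  \sum_(f : {ffun 'I_l -> I} | injectiveb f) \prod_i F (f i) <= (\sum_x F x) ^+ l.
Proof.
rewrite exprn_sum_ffun [leRHS](bigID (fun f : {ffun 'I_l -> I} => injectiveb f)) /= lerDl.
by apply: sumr_ge0 => f _; apply: prodr_ge0.
Qed.

Lemma sum_injective_ffun_ge :
  (\sum_x F x) ^+ l - 'C(l, 2)%:R * (\sum_x F x ^+ 2) * (\sum_x F x) ^+ (l - 2)
    <= \sum_(f : {ffun 'I_l -> I} | injectiveb f) \prod_i F (f i).
Proof.
set Q := \sum_x F x ^+ 2; set Y := (\sum_x F x) ^+ (l - 2).
pose coll (f : {ffun 'I_l -> I}) : R :=
  \sum_(k < l) \sum_(j < l | (j < k)%N) (f j == f k)%:R.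
have P_ge0 (f : {ffun 'I_l -> I}) : 0 <= \prod_i F (f i) by apply: prodr_ge0.
have noninj_le : \sum_(f : {ffun 'I_l -> I} | ~~ injectiveb f) \prod_i F (f i)
                 <= \sum_f coll f * \prod_i F (f i).
  rewrite [leRHS](bigID (fun f : {ffun 'I_l -> I} => injectiveb f)) /=.
  rewrite ler_wpDl ?sumr_ge0 // => [f _|].
    by rewrite mulr_ge0 ?sumr_ge0 // => k _; rewrite sumr_ge0.
  apply: ler_sum => f /ffun_noninjective_collision coll_gt0.
  rewrite ler_peMl // /coll.
  by under eq_bigr do rewrite -natr_sum; rewrite -natr_sum ler1n.
have pairs : \sum_(k < l) \sum_(j < l | (j < k)%N) (1 : R) = 'C(l, 2)%:R.
  rewrite -bin2_sum big_mkord natr_sum; apply: eq_bigr => k _.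
  rewrite -(big_mkord (fun j => j < k)%N (fun=> 1)).
  have := big_nat_widen 0 k l xpredT (fun=> 1 : R) (ltnW (ltn_ord k)).
  by rewrite /= => <-; rewrite sumr_const_nat subn0.
have coll_sum : \sum_f coll f * \prod_i F (f i) = 'C(l, 2)%:R * Q * Y.
  rewrite -mulrA -pairs mulr_suml.
  under eq_bigr do rewrite /coll mulr_suml; rewrite exchange_big /=.
  apply: eq_bigr => k _; rewrite mulr_suml.
  under eq_bigr do rewrite mulr_suml; rewrite exchange_big /=.
  apply: eq_bigr => j lt_jk; rewrite mul1r sum_ffun_collision //.
  by rewrite neq_ltn lt_jk.
rewrite exprn_sum_ffun (bigID (fun f : {ffun 'I_l -> I} => injectiveb f)) /=.
by rewrite -addrA gerDl subr_le0 -coll_sum.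
Qed.

End InjectiveTuples.

Section FirstPassage.
Variables (R : realType) (c : nat -> R).

Lemma psum0 : psum c 0 = 0.
Proof. by rewrite /psum big_geq. Qed.

Lemma psumS (n : nat) : psum c n.+1 = psum c n + c n.+1.
Proof. by rewrite /psum big_nat_recr. Qed.

Lemma psum_cat (a b : nat) : (a <= b)%N ->
  psum c b = psum c a + \sum_(a.+1 <= r < b.+1) c r.
Proof. by move=> le_ab; rewrite /psum -big_cat_nat ?ltnS. Qed.

Lemma tau_min (u : R) (m : nat) : u <= psum c m -> (tau c u <= m)%N.
Proof.
move=> reach_m; rewrite /tau; case: pselect => [reach|]; last by case; exists m.
by case: ex_minnP => n _; apply.
Qed.

Lemma psum_tau (u : R) : (exists m, u <= psum c m) -> u <= psum c (tau c u).
Proof. by move=> reach; rewrite /tau; case: pselect => // {}reach; case: ex_minnP. Qed.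

Lemma tau_gt0 (u : R) : (exists m, u <= psum c m) -> 0 < u -> (0 < tau c u)%N.
Proof.
move=> /psum_tau reached u_gt0; rewrite lt0n; apply/eqP => tau0.
by move: reached; rewrite tau0 psum0 leNgt u_gt0.
Qed.

(* By minimality of [tau], one step earlier the partial sum is still below [u]. *)
Lemma psum_tau_lt (u : R) : (0 < tau c u)%N -> psum c (tau c u) < u + c (tau c u).
Proof.
case Etau: (tau c u) => [//|n] _; rewrite psumS ltrD2r ltNge.
by apply/negP => /tau_min; rewrite Etau ltnn.
Qed.

Lemma tau_window (s t : R) : (exists m, t <= psum c m) -> 0 < s -> s <= t ->
  let X := \sum_((tau c s).+1 <= r < (tau c t).+1) c r in
  [/\ (0 < tau c s)%N, (tau c s <= tau c t)%N,
      t - s - c (tau c s) <= X & X <= t - s + c (tau c t)].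
Proof.
move=> reach_t s_gt0 le_st X.
have reach_s : exists m, s <= psum c m.
  by case: reach_t => m reach_m; exists m; apply: le_trans reach_m.
have tau_s_gt0 := tau_gt0 reach_s s_gt0.
have tau_t_gt0 := tau_gt0 reach_t (lt_le_trans s_gt0 le_st).
have le_tau : (tau c s <= tau c t)%N by apply/tau_min/(le_trans le_st)/psum_tau.
have := psum_cat le_tau; rewrite -/X => psum_tE.
have := psum_tau reach_s; have := psum_tau_lt tau_s_gt0.
have := psum_tau reach_t; have := psum_tau_lt tau_t_gt0.
by split => //; lra.
Qed.

End FirstPassage.

Definition window (R : realType) (c : nat -> R) (a b : nat) (x : 'I_b.+1) : R :=
  if (a < x)%N then c x else 0.
Arguments window {R} c a b x.

Lemma sum_window (R : realType) (c : nat -> R) (a b : nat) :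
  \sum_x window c a b x = \sum_(a.+1 <= r < b.+1) c r.
Proof.
rewrite /window -big_mkcond -(big_mkord (fun x => a < x)%N c).
by have := big_nat_widenl a.+1 0 b.+1 xpredT c (leq0n _); rewrite /= => ->.
Qed.

Lemma window_sqr (R : realType) (c : nat -> R) (a b : nat) (x : 'I_b.+1) :
  window c a b x ^+ 2 = window (fun r => c r ^+ 2) a b x.
Proof. by rewrite /window; case: ifP; rewrite ?expr0n. Qed.

Lemma distinct_sum_window (R : realType) (c : nat -> R) (l a b : nat) :
  distinct_sum c l a b
    = \sum_(f : {ffun 'I_l -> 'I_b.+1} | injectiveb f) \prod_i window c a b (f i).
Proof.
rewrite /distinct_sum.
rewrite [RHS](bigID (fun f : {ffun 'I_l -> 'I_b.+1} => [forall j, a < f j]%N)) /=.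
rewrite [X in _ = _ + X]big1 ?addr0 => [|f /andP[_ /forallPn[j /negbTE out_j]]].
  apply: eq_bigr => f /andP[_ /forallP in_f].
  by apply: eq_bigr => i _; rewrite /window in_f.
by rewrite (bigD1 j) //= /window out_j mul0r.
Qed.

Lemma distinct_sum_bounds (R : realType) (c : nat -> R) (l a b : nat) :
  (forall r, 0 <= c r) ->
  let X := \sum_(a.+1 <= r < b.+1) c r in
  [/\ 0 <= distinct_sum c l a b, distinct_sum c l a b <= X ^+ l &
       X ^+ l - 'C(l, 2)%:R * (\sum_(a.+1 <= r < b.+1) c r ^+ 2) * X ^+ (l - 2)
         <= distinct_sum c l a b].
Proof.
move=> c_ge0 X; have window_ge0 x : 0 <= window c a b x by rewrite /window; case: ifP.
have sum_sqr : \sum_(a.+1 <= r < b.+1) c r ^+ 2 = \sum_x window c a b x ^+ 2.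
  by rewrite -sum_window; apply: eq_bigr => x _; rewrite window_sqr.
rewrite distinct_sum_window sum_sqr /X -sum_window.
split; last exact: sum_injective_ffun_ge.
  by apply: sumr_ge0 => f _; apply: prodr_ge0.
exact: sum_injective_ffun_le.
Qed.

Theorem lemma4 (R : realType) (N : nat) (nu : nat -> 'I_N -> nat)
  (HN : (2 <= N)%N)
  (Hnu : forall r, (1 <= r)%N -> (\sum_(i < N) nu r i)%N = N)
  (Htau : forall u : R, 0 <= u -> exists s, u <= psum (cN R nu) s)
  (s t : R) (l : nat) (hs : 0 < s) (hst : s < t) :
  let c := cN R nu in
  let S := distinct_sum c l (tau c s) (tau c t) in
  (S <= (t - s + 1) ^+ l /\ (t - s + 1) ^+ l <= (t + 1) ^+ l) /\
  ((if c (tau c s) <= t - s then 1 else 0) *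
     ((t - s) ^+ l
      - (c (tau c s) + ('C(l, 2))%:R * \sum_((tau c s).+1 <= r < (tau c t).+1) c r ^+ 2)
        * (t + 1) ^+ l)
     <= S /\
   S <= (t - s) ^+ l + c (tau c t) * (t + 1) ^+ l).
Proof.
move=> c S.
have c_ge0 r : 0 <= c r := cN_ge0 R nu r.
have c01 r : (1 <= r)%N -> 0 <= c r <= 1 by move=> r_ge1; rewrite c_ge0 cN_le1 ?Hnu.
have reach_t : exists m, t <= psum c m by apply: Htau; lra.
have [a_gt0 le_ab lb_X ub_X] := tau_window reach_t hs (ltW hst).
set a := tau c s in S a_gt0 le_ab lb_X ub_X *; set b := tau c t in S le_ab ub_X *.
set X := \sum_(a.+1 <= r < b.+1) c r in lb_X ub_X *.
have [S_ge0 S_le S_ge] := distinct_sum_bounds l a b c_ge0.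
rewrite -/S -/X in S_ge0 S_le S_ge.
set Q := \sum_(a.+1 <= r < b.+1) c r ^+ 2 in S_ge *.
have ca01 := c01 a a_gt0; have cb01 := c01 b (leq_trans a_gt0 le_ab).
have [[ca_ge0 _] [cb_ge0 _]] := (andP ca01, andP cb01).
have X_ge0 : 0 <= X by apply: sumr_ge0.
have tsX_le : (t - s + 1) ^+ l <= (t + 1) ^+ l by apply: ler_wXn2r; lra.
split; [split => // | split].
- by apply: le_trans S_le (ler_wXn2r _ X_ge0 _); lra.
- case: ifP => [ca_le|_]; last by rewrite mul0r.
  have Z_ge0 : 0 <= t - s - c a by lra.
  have chord : (t - s) ^+ l <= (t - s - c a) ^+ l + c a * (t - s - c a + 1) ^+ l.
    by apply: exprn_le_addr => //; lra.
  have Z_le := ler_wXn2r l Z_ge0 lb_X.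
  have Z1_le : c a * (t - s - c a + 1) ^+ l <= c a * (t + 1) ^+ l.
    by rewrite ler_wpM2l // ler_wXn2r //; lra.
  have X_le : X ^+ (l - 2) <= (t + 1) ^+ l.
    apply: le_trans (ler_weXn2l (_ : 1 <= t + 1) (leq_subr 2 l)); last lra.
    by apply: ler_wXn2r; lra.
  have CQ_ge0 : 0 <= 'C(l, 2)%:R * Q.
    by rewrite mulr_ge0 ?ler0n ?sumr_ge0 // => r _; rewrite sqr_ge0.
  have := ler_wpM2l CQ_ge0 X_le; lra.
- have ts_ge0 : 0 <= t - s by lra.
  have := exprn_le_addr l X_ge0 ts_ge0 cb01 ub_X.
  have := ler_wpM2l cb_ge0 tsX_le; lra.
Qed.
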